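(* Let $\Omega\subset\mathbb{C}^2$ be a simply connected domain and let $\{t_n\}_{n\in\mathbb{Z}}$ be nowhere vanishing holomorphic functions on $\Omega$ satisfying $\partial_x\partial_y\log t_n=t_{n+1}t_{n-1}/t_n^2$ for all $n$. Put $s_{n+1}=\partial_y\log(t_n/t_{n+1})$, $r_n=\partial_x\partial_y\log t_n$, $M_n=\partial_x\partial_y+s_{n+1}\partial_x+r_n$, $H_n=\partial_y+s_{n+1}$, $B_n=-r_n^{-1}\partial_x$. Suppose $\{u_n\}_{n\in\mathbb{Z}}$ are holomorphic functions on $\Omega$ with $M_nu_n=0$, $u_{n+1}=H_nu_n$ and $u_{n-1}=B_nu_n$ for all $n\in\mathbb{Z}$. Then $\tau_n=t_nu_n$ satisfies $\partial_x\partial_y\log\tau_n=\tau_{n+1}\tau_{n-1}/\tau_n^2$ for all $n\in\mathbb{Z}$, on any open subset where all $u_n$ are nowhere zero.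
   Context: Note $r_n=t_{n+1}t_{n-1}/t_n^2$ is nowhere zero, so $B_n$ is well defined. *)

(* The complex numbers are modelled as R[i] (mathcomp-real-closed `complex`)
   over an arbitrary realType R, taken through the regular-algebra alias ^o
   so that it is a normed module over itself; C^2 is the product
   (R[i]^o * R[i]^o), a normed module over the scalar field R[i].
   Derivatives ('D_v, differentiable) are therefore complex derivatives. *)
From HB Require Import structures.
From mathcomp Require Import all_boot all_order all_algebra.
From mathcomp Require Import complex.
From mathcomp Require Import all_classical all_reals all_analysis.
Import Order.TTheory GRing.Theory Num.Theory.
Import numFieldNormedType.Exports.

Set Implicit Arguments.
Unset Strict Implicit.
Unset Printing Implicit Defensive.

Local Open Scope ring_scope.
Local Open Scope classical_set_scope.

Notation Cplx R := ((R[i])^o).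
Notation C2 R := ((R[i])^o * (R[i])^o)%type.

Definition dx (R : realType) (f : C2 R -> Cplx R) (z : C2 R) : Cplx R :=
  'D_((1 : Cplx R), (0 : Cplx R)) f z.
Definition dy (R : realType) (f : C2 R -> Cplx R) (z : C2 R) : Cplx R :=
  'D_((0 : Cplx R), (1 : Cplx R)) f z.

(* d/dy log f = (d/dy f) / f  (logarithmic derivative; independent of the
   branch of the logarithm) *)
Definition dylog (R : realType) (f : C2 R -> Cplx R) (z : C2 R) : Cplx R :=
  dy f z / f z.

Definition holomorphic_on (R : realType) (O : set (C2 R)) (f : C2 R -> Cplx R) :=
  forall z, O z -> differentiable f z.

Definition simply_connected (R : realType) (O : set (C2 R)) :=
  forall g : R -> C2 R,
    {within `[0, 1]%classic, continuous g} ->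
    g 0 = g 1 ->
    g @` `[0, 1]%classic `<=` O ->
    exists H : (R * R)%type -> C2 R,
      [/\ {within (`[0, 1]%classic `*` `[0, 1]%classic), continuous H},
          H @` (`[0, 1]%classic `*` `[0, 1]%classic) `<=` O,
          (forall s, `[0, 1]%classic s -> H (s, 0) = g s /\ H (s, 1) = H (0, 1)) &
          (forall v, `[0, 1]%classic v -> H (0, v) = H (1, v))].

Definition domain (R : realType) (O : set (C2 R)) :=
  [/\ O !=set0, open O & connected O].

From HB Require Import structures.
From mathcomp Require Import all_boot all_order all_algebra.
From mathcomp Require Import complex.
From mathcomp Require Import all_classical all_reals all_analysis.
From mathcomp Require Import ring.
Import Order.TTheory GRing.Theory Num.Theory.
Import numFieldNormedType.Exports.
Local Open Scope ring_scope.
Local Open Scope classical_set_scope.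

(* Write r_n = d_x d_y log t_n.  On U we have d_y log tau_n = d_y log t_n +
   d_y u_n / u_n, and the relation u_{n+1} = H_n u_n turns this into
   u_{n+1} / u_n + d_y log t_{n+1}.  The relation u_{n-1} = B_n u_n says
   d_x u_n = - r_n u_{n-1}, hence
   d_x (u_{n+1} / u_n) = - r_{n+1} + r_n u_{n+1} u_{n-1} / u_n^2,
   so d_x d_y log tau_n = r_n u_{n+1} u_{n-1} / u_n^2, which is the Toda
   equation for tau once r_n is replaced by t_{n+1} t_{n-1} / t_n^2. *)

Section LogarithmicDerivative.
Context {R : numFieldType} {V : normedModType R}.
Implicit Types (f g : V -> R^o) (x v : V).

Definition logderive v f x : R^o := 'D_v f x / f x.

Lemma scale_regularE (a b : R^o) : a *: b = a * b.
Proof. by []. Qed.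

(* ['D_v f x] is [0] when [f] is not derivable at [x] along [v]. *)
Lemma derive_neq0_derivable [f x v] : 'D_v f x != 0 -> derivable f x v.
Proof. exact: cvgNpoint. Qed.

Lemma logderiveM [f g x v] : derivable f x v -> derivable g x v ->
  f x != 0 -> g x != 0 ->
  logderive v (fun y => f y * g y) x = logderive v f x + logderive v g x.
Proof.
move=> df dg f0 g0; rewrite /logderive.
have -> : (fun y => f y * g y) = f * g by [].
rewrite deriveM; [|exact: df|exact: dg].
rewrite !scale_regularE.
by field; rewrite f0 g0.
Qed.

Lemma logderiveV [g x v] : derivable g x v -> g x != 0 ->
  logderive v (fun y => (g y)^-1) x = - logderive v g x.
Proof.
move=> dg g0; rewrite /logderive deriveV // scale_regularE.
by field; rewrite g0.
Qed.

Lemma logderive_div [f g x v] : derivable f x v -> derivable g x v ->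
  f x != 0 -> g x != 0 ->
  logderive v (fun y => f y / g y) x = logderive v f x - logderive v g x.
Proof.
move=> df dg f0 g0.
by rewrite logderiveM ?logderiveV ?invr_eq0 //; exact: derivableV.
Qed.

End LogarithmicDerivative.

Section Dressing.
Variables (R : numFieldType) (V : normedModType R) (a b : V).
Variables (U : set V) (t u : int -> V -> R^o).
Hypothesis U_open : open U.
Hypothesis t_derivable : forall n z, U z -> derivable (t n) z b.
Hypothesis u_derivable_a : forall n z, U z -> derivable (u n) z a.
Hypothesis u_derivable_b : forall n z, U z -> derivable (u n) z b.
Hypothesis t_neq0 : forall n z, U z -> t n z != 0.
Hypothesis u_neq0 : forall n z, U z -> u n z != 0.

Let s n z : R^o := logderive b (fun w => t n w / t (n + 1) w) z.
Let r n z : R^o := 'D_a (logderive b (t n)) z.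
Hypothesis r_neq0 : forall n z, U z -> r n z != 0.
Hypothesis u_raise :
  forall n z, U z -> u (n + 1) z = ('D_b (u n) z : R^o) + s n z * u n z.
Hypothesis u_lower :
  forall n z, U z -> u (n - 1) z = - (r n z)^-1 * ('D_a (u n) z : R^o).

Lemma derive_u_lower n z : U z -> 'D_a (u n) z = - r n z * u (n - 1) z.
Proof. by move=> Uz; rewrite u_lower //; field; rewrite r_neq0. Qed.

Lemma logderive_dressed n z : U z ->
  logderive b (fun w => t n w * u n w) z
  = u (n + 1) z / u n z + logderive b (t (n + 1)) z.
Proof.
move=> Uz; have u0 := u_neq0 n z Uz.
rewrite (logderiveM (t_derivable _ _ Uz) (u_derivable_b _ _ Uz)) ?t_neq0 //.
rewrite u_raise // /s.
rewrite (logderive_div (t_derivable _ _ Uz) (t_derivable _ _ Uz)) ?t_neq0 //.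
by rewrite /logderive; field; rewrite u0 !t_neq0.
Qed.

Lemma derive_logderive_dressed n z : U z ->
  ('D_a (logderive b (fun w => t n w * u n w)) z : R^o)
  = r n z * (u (n + 1) z * u (n - 1) z / u n z ^+ 2).
Proof.
move=> Uz; have u0 := u_neq0 n z Uz.
have logderiveE : \forall w \near z,
    logderive b (fun w => t n w * u n w) w
    = (u (n + 1) * (fun w => (u n w)^-1) + logderive b (t (n + 1))) w.
  apply: filterS (open_nbhs_nbhs (conj U_open Uz)) => w Uw.
  by rewrite logderive_dressed.
have du0 := u_derivable_a n z Uz.
have du1 := u_derivable_a (n + 1) z Uz.
have du_inv : derivable (fun w => (u n w)^-1) z a by exact: derivableV.
rewrite (near_eq_derive _ logderiveE) deriveD; last first.
- exact/derive_neq0_derivable/r_neq0.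
- exact: derivableM.
rewrite deriveM // deriveV // !scale_regularE.
rewrite -/(r (n + 1) z) !derive_u_lower // addrK.
by field; rewrite u0.
Qed.

End Dressing.

Section ComplexPlane.
Variable R : realType.
Implicit Types (f : C2 R -> Cplx R) (z : C2 R).

Let e1 : C2 R := (1, 0).
Let e2 : C2 R := (0, 1).

Lemma dx_dylogE f z : dx (dylog f) z = 'D_e1 (logderive e2 f) z.
Proof. reflexivity. Qed.

Lemma dx_dylog_dressed (U : set (C2 R)) (t u : int -> C2 R -> Cplx R) :
  open U ->
  (forall n, holomorphic_on U (t n)) -> (forall n, holomorphic_on U (u n)) ->
  (forall n z, U z -> t n z != 0) -> (forall n z, U z -> u n z != 0) ->
  (forall n z, U z -> dx (dylog (t n)) z != 0) ->
  (forall n z, U z ->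
     u (n + 1) z = dy (u n) z + dylog (fun w => t n w / t (n + 1) w) z * u n z) ->
  (forall n z, U z -> u (n - 1) z = - (dx (dylog (t n)) z)^-1 * dx (u n) z) ->
  forall n z, U z ->
  dx (dylog (fun w => t n w * u n w)) z
  = dx (dylog (t n)) z * (u (n + 1) z * u (n - 1) z / u n z ^+ 2).
Proof.
move=> U_open t_holo u_holo t_neq0 u_neq0 dx_dylog_neq0 u_raise u_lower_dx n z Uz.
have t_derivable k w v : U w -> derivable (t k) w v.
  by move=> Uw; apply/diff_derivable/t_holo.
have u_derivable k w v : U w -> derivable (u k) w v.
  by move=> Uw; apply/diff_derivable/u_holo.
(* These restatements are convertible to the hypotheses, but unifying the
   complex field structure with the one inferred for a [numFieldType] takes
   the elaborator about a minute per hypothesis; rewriting is immediate. *)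
have r_neq0 k w : U w -> 'D_e1 (logderive e2 (t k)) w != 0.
  by rewrite -dx_dylogE; exact: dx_dylog_neq0.
have u_lower k w :
    U w -> u (k - 1) w = - ('D_e1 (logderive e2 (t k)) w)^-1 * dx (u k) w.
  by rewrite -dx_dylogE; exact: u_lower_dx.
rewrite !dx_dylogE (@derive_logderive_dressed _ _ e1 e2 U t u U_open
  (fun k w => t_derivable k w e2) (fun k w => u_derivable k w e1)
  (fun k w => u_derivable k w e2) t_neq0 u_neq0 r_neq0 u_raise u_lower n z Uz).
by [].
Qed.

End ComplexPlane.

Theorem mainTheorem14 (R : realType) (O : set (C2 R))
  (t u : int -> C2 R -> Cplx R) :
  domain O -> simply_connected O ->
  (forall n, holomorphic_on O (t n)) ->
  (forall n z, O z -> t n z != 0) ->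
  (* Toda equation for t *)
  (forall n z, O z ->
     dx (dylog (t n)) z = t (n + 1) z * t (n - 1) z / t n z ^+ 2) ->
  (* s_{n+1} = d_y log (t_n / t_{n+1}),  r_n = d_x d_y log t_n *)
  let s := fun n : int => dylog (fun w => t n w / t (n + 1) w) in
  let r := fun n : int => dx (dylog (t n)) in
  (forall n, holomorphic_on O (u n)) ->
  (* M_n u_n = 0 *)
  (forall n z, O z ->
     dx (dy (u n)) z + s n z * dx (u n) z + r n z * u n z = 0) ->
  (* u_{n+1} = H_n u_n *)
  (forall n z, O z -> u (n + 1) z = dy (u n) z + s n z * u n z) ->
  (* u_{n-1} = B_n u_n *)
  (forall n z, O z -> u (n - 1) z = - (r n z)^-1 * dx (u n) z) ->
  forall U : set (C2 R), open U -> U `<=` O ->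
  (forall n z, U z -> u n z != 0) ->
  let tau := fun (n : int) (w : C2 R) => t n w * u n w in
  forall n z, U z ->
    dx (dylog (tau n)) z = tau (n + 1) z * tau (n - 1) z / tau n z ^+ 2.
Proof.
move=> _ _ t_holo t_neq0 toda s r u_holo _ u_raise u_lower U U_open UO u_neq0
  tau n z Uz.
have Oz := UO z Uz.
rewrite /tau (@dx_dylog_dressed _ U t u U_open) //.
- by rewrite toda //; field; rewrite !t_neq0 ?u_neq0.
- by move=> k w /UO; exact: t_holo.
- by move=> k w /UO; exact: u_holo.
- by move=> k w /UO; exact: t_neq0.
- by move=> k w /UO Ow; rewrite toda // !mulf_neq0 ?invr_eq0 ?expf_neq0 ?t_neq0.
- by move=> k w /UO; exact: u_raise.
- by move=> k w /UO; exact: u_lower.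
Qed.
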